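(* Let $\lambda$ be a partition with $n$ parts and let $\beta \in U_\lambda(n)$. If $\beta \notin UGC_\lambda(n)$, then the terminal pair $(\lambda,\beta)$ is not nonpermutable; i.e. there is a permutation $\pi \neq (1,\dots,n)$ of $[n]$ with $\mathcal{LD}_\lambda(\beta;\pi) \neq \emptyset$.
   Context: Fix an integer $n \geq 1$ and write $[k] = \{1,\dots,k\}$. A partition is $\lambda = (\lambda_1,\dots,\lambda_n)$ with $\lambda_1 \geq \dots \geq \lambda_n \geq 0$ integers. Let $R_\lambda \subseteq [n-1]$ be the set of $q \in [n-1]$ with $\lambda_q > \lambda_{q+1}$; write its elements $q_1 < \dots < q_r$, and set $q_0 := 0$, $q_{r+1} := n$. For $h \in [r+1]$ the $h$-th carrel is the index interval $\{q_{h-1}+1,\dots,q_h\}$. A $\lambda$-tuple is an $n$-tuple $\beta$ with entries in $[n]$, considered with this carrel structure; it is upper if $\beta_i \geq i$ for all $i$. $U_\lambda(n)$ is the set of upper $\lambda$-tuples. Critical indices: for $\beta \in U_\lambda(n)$ and $h \in [r+1]$, set $x_1 := q_h$; given $x_{u-1}$, if some index $x$ with $q_{h-1} < x < x_{u-1}$ satisfies $\beta_{x_{u-1}} - \beta_x > x_{u-1} - x$, let $x_u$ be the largest such $x$, otherwise stop. The $x_u$ are the critical indices of $\beta$ in carrel $h$, and the pairs $(x_u, \beta_{x_u})$ form its critical list. The critical list of $\beta$ is a flag critical list if for every $h \in [r]$, $\beta_{q_h} \leq \beta_k$ where $k$ is the smallest critical index of $\beta$ in carrel $h+1$. $UGC_\lambda(n)$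 is the set of $\beta \in U_\lambda(n)$ whose critical list is a flag critical list. Lattice paths: lattice points are integer pairs $(a,b)$ with $a \geq 0$, $b \geq 1$. A lattice path is a sequence of lattice points each consecutive step of which is $(a,b) \to (a+1,b)$ (easterly) or $(a,b) \to (a,b+1)$ (southerly). An $n$-path is $(\Lambda_1,\dots,\Lambda_n)$ with $\Lambda_m$ a lattice path starting at $(n-m,m)$. The terminals of $(\lambda,\beta)$ are $P_m := (\lambda_m + n - m, \beta_m)$, $m \in [n]$. For a permutation $\pi$ of $[n]$, $\mathcal{LD}_\lambda(\beta;\pi)$ is the set of $n$-paths with $\Lambda_m$ ending at $P_{\pi_m}$ for every $m$ and with no two distinct components sharing a lattice point. The pair $(\lambda,\beta)$ is nonpermutable if $\mathcal{LD}_\lambda(\beta;\pi) = \emptyset$ for every permutation $\pi \neq (1,\dots,n)$. *)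

(* Indices are 1-based natural numbers; a tuple
   indexed by [n] is a function nat -> nat of which only the values at
   1..n matter. *)
From mathcomp Require Import all_boot.
Set Implicit Arguments. Unset Strict Implicit. Unset Printing Implicit Defensive.

Definition is_partition (n : nat) (lam : nat -> nat) : Prop :=
  forall i, 1 <= i -> i < n -> lam i.+1 <= lam i.

Definition Rlam (n : nat) (lam : nat -> nat) : seq nat :=
  [seq q <- iota 1 n.-1 | lam q.+1 < lam q].

Definition qseq (n : nat) (lam : nat -> nat) : seq nat :=
  0 :: rcons (Rlam n lam) n.

Definition qq (n : nat) (lam : nat -> nat) (h : nat) : nat := nth 0 (qseq n lam) h.

Definition rr (n : nat) (lam : nat -> nat) : nat := size (Rlam n lam).

Definition upper_tuple (n : nat) (beta : nat -> nat) : Prop :=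
  forall i, 1 <= i <= n -> i <= beta i <= n.

(* the condition beta_y - beta_x > y - x (in Z), written in nat without subtraction *)
Definition crit_cond (beta : nat -> nat) (y x : nat) : bool :=
  y + beta x < beta y + x.

Inductive critical (beta : nat -> nat) (lo hi : nat) : nat -> Prop :=
| crit_top : critical beta lo hi hi
| crit_step y x : critical beta lo hi y -> lo < x -> x < y -> crit_cond beta y x ->
    (forall x', x < x' -> x' < y -> ~~ crit_cond beta y x') ->
    critical beta lo hi x.

Definition critical_in (n : nat) (lam beta : nat -> nat) (h x : nat) : Prop :=
  critical beta (qq n lam h.-1) (qq n lam h) x.

Definition flag_critical (n : nat) (lam beta : nat -> nat) : Prop :=
  forall h, 1 <= h <= rr n lam ->
  forall k, critical_in n lam beta h.+1 k ->
    (forall x, critical_in n lam beta h.+1 x -> k <= x) ->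
    beta (qq n lam h) <= beta k.

Definition in_UGC (n : nat) (lam beta : nat -> nat) : Prop :=
  upper_tuple n beta /\ flag_critical n lam beta.

Definition lattice_step (p p' : nat * nat) : bool :=
  (p' == (p.1.+1, p.2)) || (p' == (p.1, p.2.+1)).

Definition lattice_path_from_to (s e : nat * nat) (P : seq (nat * nat)) : Prop :=
  exists rest, P = s :: rest /\ path lattice_step s rest /\ last s rest = e
    /\ all (fun x => 0 < x.2) P.

Definition is_perm_n (n : nat) (pi : nat -> nat) : Prop :=
  (forall m, 1 <= m <= n -> 1 <= pi m <= n) /\
  (forall m m', 1 <= m <= n -> 1 <= m' <= n -> pi m = pi m' -> m = m').

Definition terminal (n : nat) (lam beta : nat -> nat) (m : nat) : nat * nat :=
  (lam m + n - m, beta m).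

Definition in_LD (n : nat) (lam beta pi : nat -> nat)
    (Lam : nat -> seq (nat * nat)) : Prop :=
  (forall m, 1 <= m <= n ->
     lattice_path_from_to (n - m, m) (terminal n lam beta (pi m)) (Lam m)) /\
  (forall m m', 1 <= m <= n -> 1 <= m' <= n -> m <> m' ->
     forall x, x \in Lam m -> x \notin Lam m').

Definition nonpermutable (n : nat) (lam beta : nat -> nat) : Prop :=
  forall pi, is_perm_n n pi -> (exists m, 1 <= m <= n /\ pi m <> m) ->
    ~ (exists Lam, in_LD n lam beta pi Lam).

(* If the flag condition fails, some carrel (q, J], with J = q_{h+1},
   contains a critical index k with beta_k < beta_q.  Since beta is upper, J < n,
   so J is a descent of lambda.  Let i >= q be the last index before k with
   beta_i > beta_k.  The cycle i -> i+1 -> ... -> k -> i is then realised by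
   nonintersecting paths, each made of at most two east-then-south hooks:
   for i <= m < k the path from row m runs straight to the terminal of row m+1;
   the path from row k turns one column before its own terminal, drops to row
   beta_k + 1 (below the terminals of rows i+1, ..., k by the choice of i) and
   runs east to the terminal of row i; to make room, each path from a row m with
   k < m <= J also turns one column early and waits in row beta_k + 1 + (m - k),
   which is at most beta_m because k is critical.  The descent at J leaves a free
   column between these paths and the straight paths from rows after J. *)

From mathcomp Require Import all_boot zify.
From Stdlib Require Import Classical.

Set Implicit Arguments. Unset Strict Implicit. Unset Printing Implicit Defensive.

Fixpoint east_run (a b l : nat) : seq (nat * nat) :=
  if l is l'.+1 then (a.+1, b) :: east_run a.+1 b l' else [::].

Fixpoint south_run (a b l : nat) : seq (nat * nat) :=
  if l is l'.+1 then (a, b.+1) :: south_run a b.+1 l' else [::].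

Lemma east_run_path a b l : path lattice_step (a, b) (east_run a b l).
Proof. by elim: l a => [|l IHl] a //=; rewrite /lattice_step eqxx IHl. Qed.

Lemma south_run_path a b l : path lattice_step (a, b) (south_run a b l).
Proof. by elim: l b => [|l IHl] b //=; rewrite /lattice_step eqxx orbT IHl. Qed.

Lemma last_east_run a b l : last (a, b) (east_run a b l) = (a + l, b).
Proof. by elim: l a => [|l IHl] a /=; rewrite ?addn0 // IHl addSnnS. Qed.

Lemma last_south_run a b l : last (a, b) (south_run a b l) = (a, b + l).
Proof. by elim: l b => [|l IHl] b /=; rewrite ?addn0 // IHl addSnnS. Qed.

Lemma mem_east_run a b l x y : (x, y) \in east_run a b l -> y = b /\ a < x <= a + l.
Proof. by elim: l a => [|l IHl] a //=; rewrite inE => /predU1P [[-> ->] | /IHl]; lia. Qed.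

Lemma mem_south_run a b l x y : (x, y) \in south_run a b l -> x = a /\ b < y <= b + l.
Proof. by elim: l b => [|l IHl] b //=; rewrite inE => /predU1P [[-> ->] | /IHl]; lia. Qed.

(* The points after (a, b) of the path going east from (a, b) to column c,
   then south to row r. *)
Definition hook (a b c r : nat) : seq (nat * nat) :=
  east_run a b (c - a) ++ south_run c b (r - b).

Definition on_hook (a b c r : nat) (p : nat * nat) : Prop :=
  p.2 = b /\ a <= p.1 <= c \/ p.1 = c /\ b <= p.2 <= r.

(* Stated for the orientation needed below: the primed hook is the one whose
   path starts further south-west. *)
Definition hook_apart (a b c r a' b' c' r' : nat) : Prop :=
  b < b' /\ c' < c \/ r < b' \/ c' < a.

Section Hook.

Variables a b c r : nat.
Hypotheses (le_ac : a <= c) (le_br : b <= r).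

Lemma hook_path : path lattice_step (a, b) (hook a b c r).
Proof.
by rewrite cat_path east_run_path last_east_run subnKC // south_run_path.
Qed.

Lemma last_hook : last (a, b) (hook a b c r) = (c, r).
Proof. by rewrite last_cat last_east_run subnKC // last_south_run subnKC. Qed.

Lemma mem_hook p : p \in hook a b c r -> on_hook a b c r p.
Proof.
case: p => x y; rewrite mem_cat /on_hook /=.
by case/orP => [/mem_east_run | /mem_south_run]; lia.
Qed.

Lemma on_hook_apart a' b' c' r' p :
  hook_apart a b c r a' b' c' r' -> on_hook a b c r p -> ~ on_hook a' b' c' r' p.
Proof. by case: p => x y; rewrite /hook_apart /on_hook /=; lia. Qed.

End Hook.

Definition two_hook_path (a b c1 r1 c2 r2 : nat) : seq (nat * nat) :=
  (a, b) :: hook a b c1 r1 ++ hook c1 r1 c2 r2.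

Section TwoHookPath.

Variables a b c1 r1 c2 r2 : nat.
Hypotheses (le_ac1 : a <= c1) (le_c12 : c1 <= c2) (le_br1 : b <= r1) (le_r12 : r1 <= r2).

Lemma mem_two_hook_path p :
  p \in two_hook_path a b c1 r1 c2 r2 -> on_hook a b c1 r1 p \/ on_hook c1 r1 c2 r2 p.
Proof.
rewrite inE mem_cat => /orP [/eqP -> | /orP [/mem_hook p1 | /mem_hook p2]].
- by left; rewrite /on_hook /=; lia.
- by left; apply: p1.
- by right; apply: p2.
Qed.

Lemma two_hook_lattice_path :
  0 < b -> lattice_path_from_to (a, b) (c2, r2) (two_hook_path a b c1 r1 c2 r2).
Proof.
move=> b_gt0; exists (hook a b c1 r1 ++ hook c1 r1 c2 r2); split=> //; split.
  by rewrite cat_path hook_path // last_hook // hook_path.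
split; first by rewrite last_cat last_hook // last_hook.
apply/allP => p /mem_two_hook_path; rewrite /on_hook; lia.
Qed.

End TwoHookPath.

Lemma two_hook_paths_disjoint a b c1 r1 c2 r2 a' b' c1' r1' c2' r2' p :
  a <= c1 <= c2 -> b <= r1 <= r2 -> a' <= c1' <= c2' -> b' <= r1' <= r2' ->
  hook_apart a b c1 r1 a' b' c1' r1' -> hook_apart a b c1 r1 c1' r1' c2' r2' ->
  hook_apart c1 r1 c2 r2 a' b' c1' r1' -> hook_apart c1 r1 c2 r2 c1' r1' c2' r2' ->
  p \in two_hook_path a b c1 r1 c2 r2 -> p \notin two_hook_path a' b' c1' r1' c2' r2'.
Proof.
move=> /andP [le_ac1 le_c12] /andP [le_br1 le_r12] /andP [le_ac1' le_c12'] /andP [le_br1' le_r12'].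
move=> ap11 ap12 ap21 ap22 /mem_two_hook_path-/(_ le_ac1 le_c12 le_br1 le_r12) [] p1.
all: apply/negP => /mem_two_hook_path-/(_ le_ac1' le_c12' le_br1' le_r12') [] p2.
- exact: on_hook_apart ap11 p1 p2.
- exact: on_hook_apart ap12 p1 p2.
- exact: on_hook_apart ap21 p1 p2.
- exact: on_hook_apart ap22 p1 p2.
Qed.

Lemma partition_antitone n lam x y :
  is_partition n lam -> 0 < x <= y -> y <= n -> lam y <= lam x.
Proof.
move=> lam_part /andP [x_gt0]; elim: y => [|y IHy]; first by rewrite leqn0 => /eqP ->.
rewrite leq_eqVlt => /predU1P [-> // | le_xy le_yn].
by apply: leq_trans (lam_part y _ _) (IHy _ _); lia.
Qed.

Lemma crit_cond_trans beta z y x :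
  crit_cond beta z y -> crit_cond beta y x -> crit_cond beta z x.
Proof. rewrite /crit_cond; lia. Qed.

Lemma critical_range beta lo hi k : lo < hi -> critical beta lo hi k -> lo < k <= hi.
Proof. by move=> lt_lohi; elim=> [|y x _]; lia. Qed.

Lemma critical_crit_cond beta lo hi k :
  critical beta lo hi k -> forall x, k < x <= hi -> crit_cond beta x k.
Proof.
elim=> [x | y x _ IHy _ lt_xy crit_yx maxx x'] /=; first lia.
case: (ltngtP x' y) => [lt_x'y | lt_yx' | ->] // x'_range.
- move: (maxx x') crit_yx; rewrite /crit_cond; lia.
- by apply: crit_cond_trans (IHy x' _) crit_yx; lia.
Qed.

Lemma beta_critical_last_carrel n beta lo k :
  upper_tuple n beta -> lo < n -> critical beta lo n k -> beta k = n.
Proof.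
move=> beta_upper lt_lon k_crit; have /andP [lt_lok le_kn] := critical_range lt_lon k_crit.
case: (ltngtP k n) => [lt_kn | | ->]; last 2 first.
- lia.
- by have := beta_upper n; lia.
have := critical_crit_cond k_crit (x := n); rewrite /crit_cond.
by have := beta_upper k; have := beta_upper n; lia.
Qed.

Lemma not_flag_critical n lam beta : ~ flag_critical n lam beta ->
  exists h k, [/\ 0 < h <= rr n lam, critical_in n lam beta h.+1 k &
                  beta k < beta (qq n lam h)].
Proof.
move=> not_flag; apply: NNPP => no_witness; apply: not_flag => h h_range k k_crit _.
by rewrite leqNgt; apply/negP => lt_k; apply: no_witness; exists h, k.
Qed.

Lemma mem_Rlam n lam q : (q \in Rlam n lam) = (0 < q < n) && (lam q.+1 < lam q).
Proof. by rewrite mem_filter mem_iota andbC; congr (_ && _); lia. Qed.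

Lemma carrel_bounds n lam h : 0 < n -> 0 < h <= rr n lam ->
  [/\ 0 < qq n lam h, qq n lam h < qq n lam h.+1 &
      qq n lam h.+1 = n \/ qq n lam h.+1 \in Rlam n lam].
Proof.
rewrite /rr /qq /= => n_gt0; case: h => // h /= lt_hr.
have R_sorted : sorted ltn (Rlam n lam) := sorted_filter ltn_trans _ (iota_ltn_sorted 1 _).
have := mem_nth 0 lt_hr; rewrite mem_Rlam => /andP [/andP [qh_gt0 qh_lt] _].
rewrite !nth_rcons lt_hr; have [lt_h1r | le_rh1] := ltnP h.+1 (size (Rlam n lam)).
  split=> //; last by right; exact: mem_nth.
  exact: (sorted_ltn_nth ltn_trans 0 R_sorted h h.+1 lt_hr lt_h1r (ltnSn h)).
by rewrite ifT; [split=> //; left | rewrite eqn_leq le_rh1 lt_hr].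
Qed.

Lemma exists_last_above (f : nat -> nat) q k : q < k -> f k < f q ->
  exists i, [/\ q <= i < k, f k < f i & forall x, i < x <= k -> f x <= f k].
Proof.
move=> lt_qk lt_fkq.
have above_q : exists x, (x < k) && (f k < f x) by exists q; apply/andP.
have below_k x : (x < k) && (f k < f x) -> x <= k by case/andP => /ltnW.
have [i /andP [lt_ik lt_fki] maxi] := ex_maxnP above_q below_k.
exists i; split=> // [|x /andP [lt_ix le_xk]]; first by rewrite lt_ik andbT maxi ?lt_qk.
rewrite leqNgt; apply/negP => lt_fkx.
have lt_xk : x < k by rewrite ltn_neqAle le_xk andbT; apply: contraTneq lt_fkx => ->; rewrite ltnn.
by have := maxi x; rewrite lt_xk lt_fkx => /(_ isT); lia.
Qed.

Section CyclicPaths.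

Variables (n : nat) (lam beta : nat -> nat) (i k J : nat).
Hypotheses (lam_part : is_partition n lam) (beta_upper : upper_tuple n beta).
Hypotheses (i_gt0 : 0 < i) (lt_ik : i < k) (le_kJ : k <= J) (lt_Jn : J < n).
Hypothesis lt_beta_ki : beta k < beta i.
Hypothesis beta_le_k : forall x, i < x <= k -> beta x <= beta k.
Hypothesis crit_k : forall x, k < x <= J -> crit_cond beta x k.
Hypothesis lam_descent : lam J.+1 < lam J.

Definition cycle_perm (m : nat) : nat :=
  if i <= m < k then m.+1 else if m == k then i else m.

Definition col (x : nat) : nat := lam x + n - x.

(* The path from row m runs east to column c1, south to row r1, east to
   column c2 and south to row r2, where (c1, r1, c2, r2) = corners m. *)
Definition corners (m : nat) : nat * nat * nat * nat :=
  if (m < i) || (J < m) then (col m, m, col m, beta m)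
  else if m < k then (col m.+1, m, col m.+1, beta m.+1)
  else if m == k then (col k - 1, beta k + 1, col i, beta i)
  else (col m - 1, beta k + 1 + m - k, col m, beta m).

Definition cycle_path (m : nat) : seq (nat * nat) :=
  let: (c1, r1, c2, r2) := corners m in two_hook_path (n - m) m c1 r1 c2 r2.

Variant corners_spec (m : nat) : nat -> nat * nat * nat * nat -> Prop :=
| CornersFixed of (m < i) || (J < m) : corners_spec m m (col m, m, col m, beta m)
| CornersShift of i <= m < k : corners_spec m m.+1 (col m.+1, m, col m.+1, beta m.+1)
| CornersTurn of m = k : corners_spec m i (col k - 1, beta k + 1, col i, beta i)
| CornersRise of k < m <= J :
    corners_spec m m (col m - 1, beta k + 1 + m - k, col m, beta m).

Lemma cornersP m : corners_spec m (cycle_perm m) (corners m).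
Proof.
rewrite /cycle_perm /corners.
have [out | /norP []] := boolP ((m < i) || (J < m)).
  by rewrite ifN; [rewrite ifN; [constructor | lia] | lia].
rewrite -!leqNgt => le_im le_mJ; rewrite le_im /=.
have [lt_mk | le_km] := ltnP m k; first by constructor; lia.
have [-> | ne_mk] := eqVneq m k; first exact: CornersTurn.
by constructor; lia.
Qed.

Lemma cycle_perm_is_perm : is_perm_n n cycle_perm.
Proof.
split=> [m m_range | m m' m_range m'_range].
  by case: cornersP; lia.
by case: cornersP; case: cornersP; lia.
Qed.

Lemma cycle_perm_k : cycle_perm k = i.
Proof. by rewrite /cycle_perm ltnn andbF eqxx. Qed.

Lemma col_antitone x y : 0 < x <= y -> y <= n -> col y <= col x.
Proof.
by move=> x_range le_yn; have := partition_antitone lam_part x_range le_yn; rewrite /col; lia.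
Qed.

Lemma col_decreasing x y : 0 < x -> x < y -> y <= n -> col y < col x.
Proof.
move=> x_gt0 lt_xy le_yn.
by have := partition_antitone lam_part (x := x) (y := y); rewrite /col; lia.
Qed.

Lemma col_jump x y : 0 < x <= J -> J < y <= n -> (col y).+1 < col x.
Proof.
move=> /andP [x_gt0 le_xJ] /andP [lt_Jy le_yn].
have := partition_antitone lam_part (x := x) (y := J).
have := partition_antitone lam_part (x := J.+1) (y := y).
rewrite /col; lia.
Qed.

Lemma start_lt_col x : 0 < x <= J -> n - x < col x.
Proof.
move=> x_range; have := partition_antitone lam_part (x := x) (y := J).
by rewrite /col; lia.
Qed.

Lemma corners_monotone m : 0 < m <= n ->
  let: (c1, r1, c2, r2) := corners m in n - m <= c1 <= c2 /\ m <= r1 <= r2.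
Proof.
move=> m_range; have := beta_upper m_range.
case: cornersP => /= [m_case | m_case | -> | m_case].
- rewrite /col; lia.
- have := beta_upper (i := m.+1); have ? := start_lt_col (x := m.+1); lia.
- have ? := start_lt_col (x := k); have ? := col_decreasing (x := i) (y := k); lia.
- have := beta_upper (i := k); have ? := start_lt_col (x := m); have := crit_k (x := m).
  rewrite /crit_cond; lia.
Qed.

Lemma cycle_path_lattice m : 0 < m <= n ->
  lattice_path_from_to (n - m, m) (terminal n lam beta (cycle_perm m)) (cycle_path m).
Proof.
move=> m_range; have := corners_monotone m_range; rewrite /cycle_path /terminal.
by case: cornersP => _ /= [/andP [? ?] /andP [? ?]]; apply: two_hook_lattice_path => //; lia.
Qed.

Lemma cycle_paths_disjoint m m' p : 0 < m -> m < m' -> m' <= n ->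
  p \in cycle_path m -> p \notin cycle_path m'.
Proof.
move=> m_gt0 lt_mm' le_m'n; have k_upper := beta_upper (i := k).
have m_range : 0 < m <= n by lia.
have m'_range : 0 < m' <= n by lia.
move: (corners_monotone m_range) (corners_monotone m'_range); rewrite /cycle_path.
(* One tactic per pair of shapes of the paths m and m', in the order of
   [corners_spec]; [idtac] marks the pairs ruled out by m < m'. *)
case: (cornersP m) => [m_case|m_case|m_case|m_case];
case: (cornersP m') => [m'_case|m'_case|m'_case|m'_case] /= [c_mono r_mono] [c_mono' r_mono'];
  [ have ? := col_decreasing (x := m) (y := m')
  | have ? := col_decreasing (x := m) (y := m'.+1)
  | have ? := col_decreasing (x := m) (y := k); have ? := col_decreasing (x := m) (y := i)
  | have ? := col_decreasing (x := m) (y := m')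
  | have ? := col_decreasing (x := m.+1) (y := m')
  | have ? := col_decreasing (x := m.+1) (y := m'.+1)
  | have ? := col_antitone (x := m.+1) (y := k); have ? := beta_le_k (x := m.+1);
    have ? := start_lt_col (x := m.+1)
  | have ? := col_decreasing (x := m.+1) (y := m'); have ? := beta_le_k (x := m.+1)
  | have ? := col_jump (x := k) (y := m'); have ? := col_decreasing (x := i) (y := k)
  | idtac
  | idtac
  | have ? := col_decreasing (x := k) (y := m'); have ? := col_decreasing (x := i) (y := k);
    have ? := start_lt_col (x := m')
  | have ? := col_jump (x := m) (y := m')
  | idtac
  | idtac
  | have ? := col_decreasing (x := m) (y := m'); have ? := start_lt_col (x := m') ];
  move=> p_in; apply: (two_hook_paths_disjoint c_mono r_mono c_mono' r_mono' _ _ _ _ p_in).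
  all: rewrite /hook_apart; lia.
Qed.

Lemma cycle_paths_LD : in_LD n lam beta cycle_perm cycle_path.
Proof.
split=> [m m_range | m m' m_range m'_range ne_mm' p p_in]; first exact: cycle_path_lattice.
case: (ltngtP m m') ne_mm' => // lt_mm' _; first by apply: cycle_paths_disjoint p_in; lia.
by apply: (contraL _ p_in) => p_in'; apply: cycle_paths_disjoint p_in'; lia.
Qed.

Lemma exists_cycle_LD : exists pi, [/\ is_perm_n n pi, exists m, 0 < m <= n /\ pi m <> m
  & exists Lam, in_LD n lam beta pi Lam].
Proof.
exists cycle_perm; split; first exact: cycle_perm_is_perm.
  by exists k; rewrite cycle_perm_k; split; lia.
by exists cycle_path; exact: cycle_paths_LD.
Qed.

End CyclicPaths.

Theorem lemma6p2 (n : nat) (lam beta : nat -> nat) :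
  1 <= n -> is_partition n lam -> upper_tuple n beta ->
  ~ in_UGC n lam beta ->
  ~ nonpermutable n lam beta /\
  exists pi, is_perm_n n pi /\ (exists m, 1 <= m <= n /\ pi m <> m) /\
    exists Lam, in_LD n lam beta pi Lam.
Proof.
move=> n_gt0 lam_part beta_upper not_UGC.
suff [pi [pi_perm pi_moves LD]] : exists pi, [/\ is_perm_n n pi,
    exists m, 0 < m <= n /\ pi m <> m & exists Lam, in_LD n lam beta pi Lam].
  by split=> [nonperm | ]; [exact: nonperm pi_perm pi_moves LD | exists pi].
have [h [k [h_range k_crit lt_beta_kq]]] :=
  not_flag_critical (fun flag => not_UGC (conj beta_upper flag)).
have [q_gt0 lt_qJ J_end] := carrel_bounds n_gt0 h_range.
move: k_crit lt_beta_kq J_end; rewrite /critical_in /=.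
set q := qq n lam h; set J := qq n lam h.+1 => k_crit lt_beta_kq J_end.
have /andP [lt_qk le_kJ] := critical_range lt_qJ k_crit.
have [lt_Jn lam_descent] : J < n /\ lam J.+1 < lam J.
  case: J_end => [J_n | ]; last by rewrite mem_Rlam => /andP [/andP [_ ->]].
  have := beta_critical_last_carrel beta_upper; have := beta_upper q.
  by rewrite -J_n in k_crit *; move=> + /(_ _ _ lt_qJ k_crit); lia.
have [i [/andP [le_qi lt_ik] lt_beta_ki beta_le_k]] := exists_last_above lt_qk lt_beta_kq.
have i_gt0 : 0 < i by apply: leq_trans le_qi.
exact: exists_cycle_LD lam_part beta_upper i_gt0 lt_ik le_kJ lt_Jn lt_beta_ki beta_le_k
  (critical_crit_cond k_crit) lam_descent.
Qed.
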